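(* Let $X$ be a separable topological space, let $T$ be a discrete space with Alexandroff compactification $Y=\alpha T=T\cup\{\infty\}$, and let $f:X\times Y\to\mathbb R$ be a separately continuous function. Then $(\wedge_f,\vee_f)$ is a stable pair of Hahn on $X$.
   Context: In $\alpha T$ the points of $T$ are isolated and neighbourhoods of $\infty$ are complements of finite subsets of $T$. $\wedge_f(x)=\inf_{y\in Y}f(x,y)$, $\vee_f(x)=\sup_{y\in Y}f(x,y)$. A pair $(g,h)$ of functions $X\to\overline{\mathbb R}$ is a stable pair of Hahn if there are continuous $u_n:X\to\overline{\mathbb R}$ with $g(x)=\min_{n\in\mathbb N}u_n(x)$ and $h(x)=\max_{n\in\mathbb N}u_n(x)$ for all $x\in X$ (attained). *)

From HB Require Import structures.
From mathcomp Require Import all_boot all_order all_algebra.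
From mathcomp Require Import all_classical all_reals all_analysis.
Set Implicit Arguments. Unset Strict Implicit. Unset Printing Implicit Defensive.
Import Order.TTheory GRing.Theory Num.Theory numFieldNormedType.Exports.
Local Open Scope classical_set_scope.
Local Open Scope ring_scope.

Definition separable_space (X : topologicalType) : Prop :=
  exists D : set X, countable D /\ dense D.

Definition separately_continuous (X Y : topologicalType) (R : realType)
    (f : X -> Y -> R) : Prop :=
  (forall x : X, continuous (f x)) /\ (forall y : Y, continuous (fun x => f x y)).

Definition wedge_f (X Y : Type) (R : realType) (f : X -> Y -> R) (x : X) : \bar R :=
  ereal_inf [set (f x y)%:E | y in [set: Y]].
Definition vee_f (X Y : Type) (R : realType) (f : X -> Y -> R) (x : X) : \bar R :=
  ereal_sup [set (f x y)%:E | y in [set: Y]].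

Definition stable_Hahn_pair (X : topologicalType) (R : realType)
    (g h : X -> \bar R) : Prop :=
  exists u : nat -> X -> \bar R,
    (forall n, continuous (u n)) /\
    (forall x, (exists n, u n x = g x) /\ (forall n, (g x <= u n x)%E)) /\
    (forall x, (exists n, u n x = h x) /\ (forall n, (u n x <= h x)%E)).

From HB Require Import structures.
From mathcomp Require Import all_boot all_order all_algebra.
From mathcomp Require Import all_classical all_reals all_analysis.
Set Implicit Arguments.
Unset Strict Implicit.
Unset Printing Implicit Defensive.
Import Order.TTheory GRing.Theory Num.Theory numFieldNormedType.Exports.
Local Open Scope classical_set_scope.
Local Open Scope ring_scope.

(* Each f x is continuous on the compact space αT, so its infimum and
   supremum are attained, and it suffices to find a sequence (y_n) in αT
   such that every value f x y is some f x y_n; then u_n := f(., y_n) works.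
   A continuous function on αT differs from its value at ∞ only on a
   countable set, so the union S of these sets for f d, d in a countable
   dense D ⊆ X, is countable. For y outside S the continuous functions
   f(., y) and f(., ∞) agree on D, hence everywhere, so an enumeration of
   S ∪ {∞} does the job. *)

Lemma compact_isolated_finite (T : ptopologicalType) (K : set T) :
  compact K -> (forall x, K x -> open [set x]) -> finite_set K.
Proof.
rewrite compact_cover => /(_ T K set1) cK isoK.
have [|F _ KF] := cK isoK; first by move=> x Kx; exists x.
by apply: sub_finite_set (finite_fset F) => x /KF [y Fy ->].
Qed.

Lemma one_point_compactification_far_finite (R : realType)
    (T : discreteTopologicalType) (g : one_point_compactification T -> R)
    (e : R) :
  0 < e -> continuous g -> finite_set [set y | e <= `|g y - g None|].
Proof.
move=> e_gt0 cg; apply: compact_isolated_finite.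
  apply: subclosed_compact one_point_compactification_compact _ => //.
  apply: (@closed_comp _ _ (fun y => `|g y - g None|) [set r | e <= r]).
    move=> y _; apply: (@cvg_norm _ _ _ (nbhs y)).
    exact: cvgB (cg y) (cvg_cst _).
  exact: closed_ge.
case=> [t _|/=]; last by rewrite subrr normr0 leNgt e_gt0.
rewrite -image_set1.
exact/one_point_compactification_open_some/discrete_open.
Qed.

Lemma one_point_compactification_countable_support (R : realType)
    (T : discreteTopologicalType) (g : one_point_compactification T -> R) :
  continuous g -> countable [set y | g y != g None].
Proof.
move=> cg.
have -> : [set y | g y != g None] =
    \bigcup_n [set y | n.+1%:R^-1 <= `|g y - g None|].
  apply/seteqP; split => y /=.
    rewrite -subr_eq0 -normr_gt0 => /ltr_add_invr[n]; rewrite add0r => /ltW.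
    by exists n.
  by move=> [n _]; apply: contraTneq => ->; rewrite subrr normr0 -ltNge.
apply: bigcup_countable => // n _; apply: finite_set_countable.
exact: one_point_compactification_far_finite.
Qed.

Lemma continuous_eq_dense (X Y : topologicalType) (D : set X) (g h : X -> Y) :
  hausdorff_space Y -> dense D -> continuous g -> continuous h ->
  (forall d, D d -> g d = h d) -> g =1 h.
Proof.
move=> hY dD cg ch gh x; apply: hY => A B /= gA hB.
pose W := g @^-1` A `&` h @^-1` B.
have Wx : nbhs x W by apply: filterI; [exact: cg | exact: ch].
have [|d [/interior_subset [gdA hdB] Dd]] := dD _ _ (@open_interior _ W).
  by exists x.
by exists (g d); split; rewrite // gh.
Qed.

Lemma one_point_compactification_countable_sections (R : realType)
    (X : topologicalType) (T : discreteTopologicalType)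
    (f : X -> one_point_compactification T -> R) :
  separable_space X -> separately_continuous f ->
  exists v : nat -> one_point_compactification T,
    forall x y, exists n, f x (v n) = f x y.
Proof.
move=> [D [cD dD]] [fxC fyC].
pose S := \bigcup_(d in D) [set y | f d y != f d None].
have /pcard_surjP[w Sw] : countable S.
  apply: bigcup_countable => // d _.
  exact: one_point_compactification_countable_support.
have off_S y : ~ S y -> forall x, f x y = f x None.
  move=> nSy.
  apply: continuous_eq_dense (@Rhausdorff R) dD (fyC y) (fyC None) _.
  by move=> d Dd; apply/eqP; apply: contra_notT nSy => ?; exists d.
exists (fun n => if n is m.+1 then w m else None) => x y.
have [Sy|/off_S ->] := pselect (S y); last by exists 0%N.
by have [m _ <-] := Sw y Sy; exists m.+1.
Qed.

Lemma compact_EVT_ereal_inf (Y : topologicalType) (R : realType) (g : Y -> R)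
    (y0 : Y) :
  compact [set: Y] -> continuous g ->
  exists c, ereal_inf [set (g y)%:E | y in [set: Y]] = (g c)%:E.
Proof.
move=> cY cg.
have [c _ gc] := compact_EVT_min (ex_intro _ y0 I) cY (continuous_subspaceT cg).
exists c; apply/le_anti/andP; split; first by apply: ereal_inf_lbound; exists c.
by apply/ereal_infP => _ [y _ <-]; rewrite lee_fin gc ?in_setT.
Qed.

Lemma compact_EVT_ereal_sup (Y : topologicalType) (R : realType) (g : Y -> R)
    (y0 : Y) :
  compact [set: Y] -> continuous g ->
  exists c, ereal_sup [set (g y)%:E | y in [set: Y]] = (g c)%:E.
Proof.
move=> cY cg.
have [c _ gc] := compact_EVT_max (ex_intro _ y0 I) cY (continuous_subspaceT cg).
exists c; apply/le_anti/andP; split; last by apply: ereal_sup_ubound; exists c.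
by apply/ereal_supP => _ [y _ <-]; rewrite lee_fin gc ?in_setT.
Qed.

Lemma stable_Hahn_pair_wedge_vee (X Y : topologicalType) (R : realType)
    (f : X -> Y -> R) (v : nat -> Y) :
  compact [set: Y] -> separately_continuous f ->
  (forall x y, exists n, f x (v n) = f x y) ->
  stable_Hahn_pair (wedge_f f) (vee_f f).
Proof.
move=> cY [fxC fyC] vS.
exists (fun n x => (f x (v n))%:E); split; [|split] => [n x|x|x].
- by apply: cvg_EFin; [exact: nearW | exact: fyC].
- split=> [|n]; last by apply: ereal_inf_lbound; exists (v n).
  rewrite /wedge_f; have [c ->] := compact_EVT_ereal_inf (v 0) cY (fxC x).
  by have [n fn] := vS x c; exists n; rewrite fn.
- split=> [|n]; last by apply: ereal_sup_ubound; exists (v n).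
  rewrite /vee_f; have [c ->] := compact_EVT_ereal_sup (v 0) cY (fxC x).
  by have [n fn] := vS x c; exists n; rewrite fn.
Qed.

Theorem proposition3p3 (R : realType) (X : topologicalType)
    (T : discreteTopologicalType)
    (f : X -> one_point_compactification T -> R) :
  separable_space X ->
  separately_continuous f ->
  stable_Hahn_pair (wedge_f f) (vee_f f).
Proof.
move=> sepX fC.
have [v vS] := one_point_compactification_countable_sections sepX fC.
exact: stable_Hahn_pair_wedge_vee one_point_compactification_compact fC vS.
Qed.
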